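(* Let $\Gamma$ be an Arf numerical semigroup with conductor $c$, let $e'\in\Gamma\setminus\{0\}$, and let $a,b\in\mathbb Z$ with $a\ge2$ and $b\ge c$. Then \[ E\big(a\Gamma_{e'}\cup(a(b+e')+\mathbb N),2\big)=\min\{a e',\,E(a\Gamma\cup(ab+\mathbb N),2)+1\}. \] Furthermore, if $\Gamma$ has multiplicity sequence $(d_1,\dots,d_r)$, then \[ E(a\Gamma\cup(ab+\mathbb N),2)=\min\{ad_1,\,ad_2+1,\,\dots,\,ad_{r-1}+r-2,\,a+r-1,\,(b-c)+r\}. \]
   Context: A numerical semigroup is a subset $\Gamma\subseteq\mathbb N$ containing $0$, closed under addition, with finite complement; write $\Gamma=\{0=\rho_1<\rho_2<\cdots\}$, conductor $c=\rho_r$ (least $c$ with $c+\mathbb N\subseteq\Gamma$), genus $g=|\mathbb N\setminus\Gamma|$. $\Gamma$ is Arf if $\rho_i+\rho_j-\rho_k\in\Gamma$ for all $i\ge j\ge k$. Multiplicity sequence: $(d_1,\dots,d_r)$ with $d_i=\rho_{i+1}-\rho_i$. $\Gamma_{e'}=\{0\}\cup(e'+\Gamma)$; $aS=\{as:s\in S\}$; $ab+\mathbb N=\{ab+n:n\in\mathbb N\}$. For a numerical semigroup $S$ with conductor $c_S$ and genus $g_S$, let $D_S(x)=\{s\in S:x-s\in S\}$ and $\delta^2_S(m)=\min\{|D_S(m_1)\cup D_S(m_2)|: m\le m_1<m_2,\ m_i\in S\}$; the second Feng-Rao number $E(S,2)$ is the integer with $\delta^2_S(m)=m+1-2g_S+E(S,2)$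 for all $m\ge 2c_S-1$. *)

From mathcomp Require Import all_boot all_order all_algebra.
Set Implicit Arguments. Unset Strict Implicit. Unset Printing Implicit Defensive.
Import Order.TTheory GRing.Theory Num.Theory.

Definition numerical_semigroup (S : pred nat) : Prop :=
  [/\ S 0, (forall x y, S x -> S y -> S (x + y)) &
      (exists N, forall n, N <= n -> S n)].

Definition is_conductor (S : pred nat) (c : nat) : Prop :=
  (forall n, c <= n -> S n) /\
  (forall c', (forall n, c' <= n -> S n) -> c <= c').

(* genus, given the conductor c: number of gaps (all gaps are < c) *)
Definition genus_below (S : pred nat) (c : nat) : nat :=
  count (fun n => ~~ S n) (iota 0 c).

Definition arf (S : pred nat) : Prop :=
  forall x y z, S x -> S y -> S z -> y <= x -> z <= y -> S (x + y - z).

(* Multiplicity sequence (d_1,...,d_r), d_i = rho_(i+1) - rho_i, where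
   rho_1 < ... < rho_r = c are the elements of S up to the conductor c. *)
Definition mult_seq (S : pred nat) (ds : seq nat) : Prop :=
  exists c, is_conductor S c /\
    let rs := [seq n <- iota 0 c.+2 | S n] in   (* rho_1, ..., rho_r, rho_(r+1) *)
    ds = [seq nth 0 rs i.+1 - nth 0 rs i | i <- iota 0 (size rs).-1].

(* Gamma_{e'} = {0} U (e' + Gamma) *)
Definition shiftS (S : pred nat) (e : nat) : pred nat :=
  fun x => (x == 0) || ((e <= x) && S (x - e)).

(* a S = {a s : s in S}  (for a >= 1) *)
Definition scaleS (a : nat) (S : pred nat) : pred nat :=
  fun x => (a %| x) && S (x %/ a).

Definition unionTail (A : pred nat) (k : nat) : pred nat :=
  fun x => A x || (k <= x).

Definition inD (S : pred nat) (x s : nat) : bool := [&& s <= x, S s & S (x - s)].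

(* |D_S(m1) U D_S(m2)| for m1 < m2 (all elements are <= m2) *)
Definition cardDU (S : pred nat) (m1 m2 : nat) : nat :=
  count (fun s => inD S m1 s || inD S m2 s) (iota 0 m2.+1).

Definition is_delta2 (S : pred nat) (m d : nat) : Prop :=
  (exists m1 m2, [/\ m <= m1, m1 < m2, S m1, S m2 & cardDU S m1 m2 = d]) /\
  (forall m1 m2, m <= m1 -> m1 < m2 -> S m1 -> S m2 -> d <= cardDU S m1 m2).

Definition FengRao2 (S : pred nat) (E : int) : Prop :=
  exists c, is_conductor S c /\
    forall m : nat, 2 * c <= m + 1 ->
      exists d, is_delta2 S m d /\
        (d%:Z = m%:Z + 1 - 2 * (genus_below S c)%:Z + E)%R.

From mathcomp Require Import all_boot all_order all_algebra.
From mathcomp Require Import zify.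
Import Order.TTheory GRing.Theory Num.Theory.

Set Implicit Arguments.
Unset Strict Implicit.
Unset Printing Implicit Defensive.

(* For a numerical semigroup [S] with conductor [C], genus [g] and [2C - 1 <= m1 < m2],
   counting [D(m1) \cup D(m2)] gives [m2 + 1 - 2g] plus the number of [t < C] in [S] with
   [t + k] not in [S], where [k = m2 - m1]. Hence [E(S, 2)] is the least "cost"
   [k + #{t < C in S | t + k \notin S}] of a shift [k > 0].
   For [S = a Gamma \cup (ab + N)] with [Gamma] Arf, the shift [a d_i] costs at most
   [a d_i + i], since by the Arf property every element of [Gamma] from [rho_i] on stays in
   [Gamma] when [d_i] is added, and the shift [1] costs at most [b - c + r]. Conversely a
   shift [k] not divisible by [a] moves every [a x] with [a x + k < ab] out of [S], and a
   shift [a j] is at least as costly as [a d_i + i] or [b - c + r], where [rho_i] is the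
   least element of [Gamma] with [rho_i + j] in [Gamma].
   Replacing [Gamma] by [Gamma_e'] turns [S] into [0], a gap of length [a e'] and a translate
   of [S]: the cost of a shift outside the new semigroup grows by one, and a shift inside it
   costs at least [a e'], with equality for [a e'] itself. *)

Lemma sub_in_count (T : eqType) (p q : pred T) (s : seq T) :
  {in s, forall x, p x -> q x} -> count p s <= count q s.
Proof.
move=> pq; rewrite (@eq_in_count _ p (predI p q)); last first.
  by move=> x /pq /=; case: (p x) => // /(_ isT) ->.
by apply: sub_count => x /andP[].
Qed.

Lemma count_or_andN (T : Type) (p q : pred T) (s : seq T) :
  count (fun x => p x || q x) s = count q s + count (fun x => p x && ~~ q x) s.
Proof. by elim: s => //= x s ->; case: (p x); case: (q x) => /=; lia. Qed.

Section CountIota.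
Variable P : pred nat.

Lemma count_iota_split m n : m <= n ->
  count P (iota 0 n) = count P (iota 0 m) + count P (iota m (n - m)).
Proof. by move=> mn; rewrite -{1}(subnKC mn) iotaD count_cat. Qed.

Lemma count_iota_mono m n : m <= n -> count P (iota 0 m) <= count P (iota 0 n).
Proof. by move=> mn; rewrite (count_iota_split mn) leq_addr. Qed.

Lemma count_iotaS n : count P (iota 0 n.+1) = count P (iota 0 n) + P n.
Proof. by rewrite -addn1 iotaD count_cat /= addn0. Qed.

Lemma count_iota_restrict m n : m <= n -> (forall x, m <= x < n -> ~~ P x) ->
  count P (iota 0 n) = count P (iota 0 m).
Proof.
move=> mn Pout; rewrite (count_iota_split mn) -[RHS]addn0; congr (_ + _).
rewrite (@eq_in_count _ _ pred0) ?count_pred0 // => x.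
by rewrite mem_iota subnKC // => /Pout /negbTE.
Qed.

Lemma count_iota_le_add m n : m <= n ->
  count P (iota 0 n) <= count P (iota 0 m) + (n - m).
Proof.
move=> mn; rewrite (count_iota_split mn) leq_add2l.
by rewrite -[X in _ <= X](size_iota m) count_size.
Qed.

Lemma count_iota_ltn m n : m <= n ->
  count (fun x => P x && (x < m)) (iota 0 n) = count P (iota 0 m).
Proof. by move=> mn; rewrite -(filter_iota_ltn 0 mn) count_filter. Qed.

Lemma count_iota_rev x :
  count (fun s => P (x - s)) (iota 0 x.+1) = count P (iota 0 x.+1).
Proof.
elim: x => // x IH.
rewrite [RHS]count_iotaS -IH addnC (_ : iota 0 x.+2 = 0 :: iota (1 + 0) x.+1) //.
rewrite iotaDl /= subn0 count_map.
by congr (_ + _); apply: eq_count => s /=; rewrite add1n subSS.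
Qed.

Lemma count_iota_scale a n : 0 < a ->
  count (fun t => (a %| t) && P (t %/ a)) (iota 0 (a * n)) = count P (iota 0 n).
Proof.
move=> a0; elim: n => [|n IH]; first by rewrite muln0.
rewrite mulnS addnC iotaD count_cat IH count_iotaS add0n; congr (_ + _).
rewrite -[a * n]addn0 iotaDl count_map -(prednK a0) /= addn0 dvdn_mulr //.
rewrite mulKn //= -[RHS]addn0; congr (_ + _).
rewrite (@eq_in_count _ _ pred0) ?count_pred0 // => t; rewrite mem_iota => /andP[t0 ta] /=.
rewrite (dvdn_addr _ (dvdn_mulr _ (dvdnn _))) /dvdn modn_small; last by rewrite add1n in ta.
by rewrite eqn0Ngt t0.
Qed.

End CountIota.

Definition is_min_pos (f : nat -> nat) (m : nat) : Prop :=
  (exists2 k, 0 < k & f k = m) /\ (forall k, 0 < k -> m <= f k).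

Lemma is_min_pos_exists f : (forall k, k <= f k) -> exists m, is_min_pos f m.
Proof.
move=> kf; pose Q m := has (fun k => (0 < k) && (f k == m)) (iota 0 m.+1).
have Qf k : 0 < k -> Q (f k).
  by move=> k0; apply/hasP; exists k; rewrite ?k0 ?eqxx // mem_iota ltnS kf.
case: (ex_minnP (ex_intro Q _ (Qf 1 isT))) => m /hasP[k _ /andP[k0 /eqP fk]] mmin.
by exists m; split; [exists k | move=> j /Qf /mmin].
Qed.

Lemma foldr_minn_le x0 l y : y \in x0 :: l -> foldr minn x0 l <= y.
Proof.
elim: l => [|z l IH]; first by rewrite inE => /eqP ->.
rewrite /= !inE => /or3P[yx0|/eqP ->|yl]; try exact: geq_minl;
  by apply: leq_trans (geq_minr _ _) (IH _); rewrite inE ?yx0 ?yl ?orbT.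
Qed.

Lemma foldr_minn_mem x0 l : foldr minn x0 l \in x0 :: l.
Proof.
elim: l => [|z l IH] /=; first exact: mem_head.
rewrite /minn; case: ifP => _; first by rewrite !inE eqxx orbT.
by move: IH; rewrite !inE => /orP[->|->]; rewrite ?orbT.
Qed.

Lemma is_min_pos_foldr_minn f x0 l :
  (forall y, y \in x0 :: l -> exists2 k, 0 < k & f k <= y) ->
  (forall k, 0 < k -> exists2 y, y \in x0 :: l & y <= f k) ->
  is_min_pos f (foldr minn x0 l).
Proof.
move=> reach bound; have minf k : 0 < k -> foldr minn x0 l <= f k.
  by move=> /bound[y /foldr_minn_le]; apply: leq_trans.
split=> //; have [k k0 fk] := reach _ (foldr_minn_mem x0 l).
by exists k => //; apply/eqP; rewrite eqn_leq fk minf.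
Qed.

Definition shift_out (S : pred nat) (C k : nat) : nat :=
  count (fun t => S t && ~~ S (t + k)) (iota 0 C).

Definition shift_cost (S : pred nat) (C k : nat) : nat := k + shift_out S C k.

Lemma genus_below_le S C : genus_below S C <= C.
Proof. by rewrite -[X in _ <= X](size_iota 0) count_size. Qed.

Lemma conductor_unique S c1 c2 : is_conductor S c1 -> is_conductor S c2 -> c1 = c2.
Proof. by move=> [S1 min1] [S2 min2]; apply/eqP; rewrite eqn_leq min1 // min2. Qed.

Lemma shift_out_stable (S : pred nat) C k :
  (forall t, S t -> S (t + k)) -> shift_out S C k = 0.
Proof.
move=> Sk; rewrite /shift_out (@eq_in_count _ _ pred0) ?count_pred0 // => t _ /=.
by case: (boolP (S t)) => //= /Sk ->.
Qed.

Section FengRaoShift.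
Variables (S : pred nat) (C : nat).
Hypothesis condS : is_conductor S C.

Lemma count_gaps_iota x :
  C <= x -> count (fun n => ~~ S n) (iota 0 x) = genus_below S C.
Proof.
have [SC _] := condS.
by move=> Cx; rewrite (count_iota_restrict Cx) // => n /andP[/SC ->].
Qed.

Lemma card_D x : 2 * C <= x + 1 ->
  count (inD S x) (iota 0 x.+1) + 2 * genus_below S C = x.+1.
Proof.
move=> hx; have [SC _] := condS.
rewrite -[RHS](size_iota 0) -(count_predC (inD S x)); congr (_ + _).
rewrite (@eq_in_count _ _ (predU (fun s => ~~ S s) (fun s => ~~ S (x - s)))); last first.
  by move=> s; rewrite mem_iota leq0n add0n ltnS /inD /= => ->; case: (S s).
(* [s] and [x - s] cannot both be gaps, since gaps are [< C] and [x >= 2 C - 1] *)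
have disj : count (predI (fun s => ~~ S s) (fun s => ~~ S (x - s))) (iota 0 x.+1) = 0.
  rewrite (@eq_in_count _ _ pred0) ?count_pred0 // => s _ /=.
  apply/negP => /andP[gs gxs].
  have sC : s < C by rewrite ltnNge; apply: contra gs; apply: SC.
  have xsC : x - s < C by rewrite ltnNge; apply: contra gxs; apply: SC.
  lia.
have := count_predUI (fun s => ~~ S s) (fun s => ~~ S (x - s)) (iota 0 x.+1).
rewrite disj addn0 => ->.
by rewrite (count_iota_rev (fun n => ~~ S n)) count_gaps_iota ?mul2n -?addnn //; lia.
Qed.

Lemma cardDU_shift_out m1 m2 : 2 * C <= m1 + 1 -> m1 < m2 ->
  cardDU S m1 m2 + 2 * genus_below S C = m2.+1 + shift_out S C (m2 - m1).
Proof.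
move=> hm lt12; have [SC _] := condS; set k := m2 - m1.
rewrite /cardDU count_or_andN addnAC card_D; last by lia.
congr (_ + _).
rewrite (@count_iota_restrict _ m1.+1 m2.+1 (ltnW lt12)); last first.
  by move=> s /andP[s1 _]; rewrite /inD leqNgt s1.
pose Q t := S (m1 - t) && S t && ~~ S (t + k).
rewrite (@eq_in_count _ _ (fun s => Q (m1 - s))); last first.
  move=> s; rewrite mem_iota ltnS /Q /inD => /= sm1.
  have -> : m1 - s + k = m2 - s by lia.
  rewrite subKn // sm1 (leq_trans sm1 (ltnW lt12)) /=.
  by case: (S s); case: (S (m1 - s)).
rewrite count_iota_rev (@count_iota_restrict _ C); last 2 first.
- by lia.
- by move=> t /andP[Ct _]; rewrite /Q (SC (t + k)) ?andbF //; lia.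
apply: eq_in_count => t; rewrite mem_iota /Q => /andP[_ tC].
by rewrite (SC (m1 - t)) //; lia.
Qed.

Lemma FengRao2_min_shift_cost F : is_min_pos (shift_cost S C) F -> FengRao2 S F.
Proof.
move=> [[k k0 hk] Fmin]; have [SC _] := condS; have gC := genus_below_le S C.
exists C; split=> // m hm.
exists (m.+1 + F - 2 * genus_below S C); split; last by lia.
split.
  exists m, (m + k); split; rewrite ?SC //; try lia.
  have := @cardDU_shift_out m (m + k) hm; rewrite addKn.
  by move: hk; rewrite /shift_cost; lia.
move=> m1 m2 mm1 lt12 _ _.
have := @cardDU_shift_out m1 m2; have := Fmin (m2 - m1); rewrite subn_gt0 /shift_cost.
by lia.
Qed.

End FengRaoShift.

Lemma FengRao2_unique S E1 E2 : FengRao2 S E1 -> FengRao2 S E2 -> E1 = E2.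
Proof.
move=> [c1 [cond1 FR1]] [c2 [cond2 FR2]].
rewrite -(conductor_unique cond1 cond2) in FR2.
have hm : 2 * c1 <= 2 * c1 + 1 by rewrite leq_addr.
have [d1 [[[m1 [m2 [? ? ? ? card1]]] min1] E1d]] := FR1 _ hm.
have [d2 [[[n1 [n2 [? ? ? ? card2]]] min2] E2d]] := FR2 _ hm.
have : d1 <= d2 by rewrite -card2 min1.
have : d2 <= d1 by rewrite -card1 min2.
by move: E1d E2d; lia.
Qed.

Lemma conductor_scaled_tail P a n :
  2 <= a -> is_conductor (unionTail (scaleS a P) (a * n)) (a * n).
Proof.
move=> a2; split=> [x|c' Sc']; first by rewrite /unionTail orbC => ->.
rewrite leqNgt; apply/negP => c'n.
(* [a * n - 1] lies above [c'] but is not a multiple of [a] *)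
have := Sc' (a * n).-1 ltac:(lia).
rewrite /unionTail /scaleS (_ : (a * n <= (a * n).-1) = false) ?orbF; last by lia.
move=> /andP[/(dvdn_sub (dvdn_mulr n (dvdnn a)))].
by rewrite (_ : a * n - (a * n).-1 = 1) ?dvdn1; lia.
Qed.

Section ScaledTail.
Variables (P : pred nat) (a n : nat).
Hypothesis a0 : 0 < a.
Let S := unionTail (scaleS a P) (a * n).

Lemma scaled_tail_ltn t : t < a * n -> S t = (a %| t) && P (t %/ a).
Proof. by move=> tn; rewrite /S /unionTail leqNgt tn orbF. Qed.

Lemma scaled_tail_mul x : P x -> S (a * x).
Proof. by move=> Px; rewrite /S /unionTail /scaleS dvdn_mulr // mulKn // Px. Qed.

Lemma scaled_tail_addr_mul t y :
  (forall x z, P x -> P z -> P (x + z)) -> P y -> S t -> S (t + a * y).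
Proof.
move=> Padd Py; rewrite /S /unionTail /scaleS => /orP[/andP[a_dvd_t Pt]|nt].
  by rewrite dvdn_addr ?dvdn_mulr //= divnDr ?dvdn_mulr // mulKn // Padd.
by rewrite (leq_trans nt (leq_addr _ _)) orbT.
Qed.

Lemma shift_out_scaled_le (Q : pred nat) k :
  (forall x, x < n -> P x -> ~~ S (a * x + k) -> Q x) ->
  shift_out S (a * n) k <= count Q (iota 0 n).
Proof.
move=> hQ; rewrite -(count_iota_scale Q n a0); apply: sub_in_count => t.
rewrite mem_iota => /andP[_ tn] /andP[]; rewrite scaled_tail_ltn // => /andP[a_dvd_t Pt].
rewrite a_dvd_t -{1}(divnK a_dvd_t) mulnC; apply: hQ => //.
by rewrite ltn_divLR // mulnC.
Qed.

Lemma shift_out_scaled_ge (Q : pred nat) k :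
  (forall x, x < n -> P x -> Q x -> ~~ S (a * x + k)) ->
  count (fun x => P x && Q x) (iota 0 n) <= shift_out S (a * n) k.
Proof.
move=> hQ; rewrite -(count_iota_scale _ n a0); apply: sub_in_count => t.
rewrite mem_iota => /andP[_ tn] /andP[a_dvd_t /andP[Pt Qt]].
rewrite scaled_tail_ltn // a_dvd_t Pt -{1}(divnK a_dvd_t) mulnC hQ //.
by rewrite ltn_divLR // mulnC.
Qed.

End ScaledTail.

Section ShiftedScaledTail.
Variables (G : pred nat) (a b e : nat).
Hypotheses (a0 : 0 < a) (e0 : 0 < e).
Let S := unionTail (scaleS a G) (a * b).
Let S' := unionTail (scaleS a (shiftS G e)) (a * (b + e)).

Lemma shifted_tail_addl x : S' (a * e + x) = S x.
Proof.
rewrite /S' /S /unionTail /scaleS mulnDr [a * b + _]addnC leq_add2l.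
rewrite (dvdn_addr _ (dvdn_mulr _ (dvdnn _))).
case: (boolP (a %| x)) => //= a_dvd_x.
rewrite divnDl ?dvdn_mulr // mulKn // /shiftS addnC addnK leq_addl andTb.
by rewrite addn_eq0 (negbTE (lt0n_neq0 e0)) andbF.
Qed.

Lemma shifted_tail_gap t : 0 < t -> t < a * e -> ~~ S' t.
Proof.
move=> t0 te; rewrite /S' /unionTail /scaleS /shiftS.
rewrite (_ : (a * (b + e) <= t) = false) ?orbF; last by rewrite mulnDr; lia.
apply/negP => /andP[a_dvd_t]; move: t0 te; rewrite -(divnK a_dvd_t).
rewrite mulnC ltn_mul2l muln_gt0 mulKn // => /andP[_ q0] /andP[_ qe].
by case/orP=> [/eqP|/andP[]]; lia.
Qed.

Lemma shifted_tail0 : S' 0.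
Proof. by rewrite /S' /unionTail /scaleS /shiftS dvdn0 div0n. Qed.

(* [S'] is [0], then a gap of length [a * e], then a translate of [S] *)
Lemma shift_out_shifted_tail k :
  shift_out S' (a * (b + e)) k = ~~ S' k + shift_out S (a * b) k.
Proof.
have ae0 : 0 < a * e by rewrite muln_gt0 a0.
rewrite /shift_out mulnDr addnC iotaD count_cat add0n; congr (_ + _).
  rewrite -(prednK ae0) /= shifted_tail0 add0n -[RHS]addn0; congr (_ + _).
  rewrite (@eq_in_count _ _ pred0) ?count_pred0 // => t.
  by rewrite mem_iota => /andP[t0 te] /=; rewrite (negbTE (shifted_tail_gap t0 _)) //; lia.
rewrite -[a * e]addn0 iotaDl count_map; apply: eq_count => t /=.
by rewrite shifted_tail_addl -addnA shifted_tail_addl.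
Qed.

End ShiftedScaledTail.

Lemma min_Posz (m n : nat) : Num.min (Posz m) (Posz n) = Posz (minn m n).
Proof.
by case: (leqP m n) => h; [rewrite min_l ?lez_nat | rewrite min_r ?lez_nat 1?ltnW].
Qed.

Lemma FengRao2_scaled_shiftS (G : pred nat) (e a b : nat) :
  numerical_semigroup G -> G e -> 0 < e -> 2 <= a ->
  forall E2 : int,
     FengRao2 (unionTail (scaleS a G) (a * b)) E2 ->
     FengRao2 (unionTail (scaleS a (shiftS G e)) (a * (b + e)))
              (Num.min (Posz (a * e)) (E2 + 1)%R).
Proof.
move=> [G0 Gadd _] Ge e0 a2 E2 FR_E2; have a0 : 0 < a by lia.
set S := unionTail (scaleS a G) (a * b).
set S' := unionTail (scaleS a (shiftS G e)) (a * (b + e)).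
have [F minF] := @is_min_pos_exists (shift_cost S (a * b)) (fun k => leq_addr _ k).
have -> : E2 = F.
  exact: FengRao2_unique FR_E2 (FengRao2_min_shift_cost (conductor_scaled_tail _ _ a2) minF).
rewrite -[(_ + 1)%R]/(Posz (F + 1)) addn1 min_Posz minnC.
apply: (FengRao2_min_shift_cost (conductor_scaled_tail _ _ a2)).
have S'ae : S' (a * e).
  by rewrite -[a * e]addn0 /S' shifted_tail_addl // -(muln0 a) scaled_tail_mul.
have S'ge k : 0 < k -> S' k -> a * e <= k.
  by move=> k0 S'k; rewrite leqNgt; apply: contraL S'k; apply: shifted_tail_gap.
have cost' k : shift_cost S' (a * (b + e)) k = shift_cost S (a * b) k + ~~ S' k.
  by rewrite /shift_cost /S' shift_out_shifted_tail // addnCA addnC.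
have [[kF kF0 FkF] Fmin] := minF.
apply: (@is_min_pos_foldr_minn _ (a * e) [:: F.+1]) => [y|k k0].
  rewrite !inE => /orP[]/eqP->.
    exists (a * e); rewrite ?muln_gt0 ?a0 // cost' S'ae addn0 /shift_cost.
    by rewrite shift_out_stable ?addn0 // => t; apply: scaled_tail_addr_mul.
  by exists kF => //; rewrite cost' FkF; case: (S' kF) => /=; lia.
case: (boolP (S' k)) => S'k.
  exists (a * e); first by rewrite inE eqxx.
  by apply: leq_trans (S'ge k k0 S'k) _; rewrite cost' /shift_cost -addnA leq_addr.
exists F.+1; first by rewrite !inE eqxx orbT.
by rewrite cost' S'k addn1 ltnS Fmin.
Qed.

(* [rho P n i] is the paper's [rho_(i+1)]: the [i]-th element, counted from [0],
   of [P] below [n]. *)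
Definition rho (P : pred nat) (n i : nat) : nat := nth 0 [seq x <- iota 0 n | P x] i.

Section Enumeration.
Variables (P : pred nat) (n : nat).
Let N := count P (iota 0 n).

Lemma rho_count x : x < n -> P x -> rho P n (count P (iota 0 x)) = x.
Proof.
move=> xn Px; rewrite /rho (_ : n = x + (1 + (n - x.+1))); last by lia.
by rewrite iotaD filter_cat nth_cat size_filter ltnn subnn iotaD /= Px.
Qed.

Lemma rho_mem i : i < N -> P (rho P n i) && (rho P n i < n).
Proof.
rewrite /N -size_filter => /(mem_nth 0); rewrite mem_filter mem_iota.
by case/andP=> -> /andP[_]; rewrite add0n.
Qed.

Lemma count_rho i : i < N -> count P (iota 0 (rho P n i)) = i.
Proof.
move=> iN; have /andP[Px xn] := rho_mem iN.
have uniq_rs : uniq [seq x <- iota 0 n | P x] by rewrite filter_uniq // iota_uniq.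
have cN : count P (iota 0 (rho P n i)) < N.
  by apply: leq_trans (count_iota_mono P xn); rewrite count_iotaS Px addn1.
apply/eqP; rewrite -(nth_uniq 0 _ _ uniq_rs) ?size_filter //.
by rewrite [nth _ _ (count _ _)]rho_count.
Qed.

Lemma rho_ltn i : i.+1 < N -> rho P n i < rho P n i.+1.
Proof.
move=> iN; have iN' := ltnW iN; rewrite ltnNge; apply/negP => le_rho.
by have := count_iota_mono P le_rho; rewrite !count_rho // ltnn.
Qed.

Lemma rho_next i y : i.+1 < N -> P y -> rho P n i < y -> rho P n i.+1 <= y.
Proof.
move=> iN Py lt_y; rewrite leqNgt; apply/negP => gt_y.
have /andP[Px _] := rho_mem (ltnW iN).
have := count_iota_mono P gt_y; have := count_iota_mono P lt_y.
by rewrite !count_iotaS Px Py !count_rho // ?(ltnW iN); lia.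
Qed.

End Enumeration.

Section MultiplicitySequence.
Variables (G : pred nat) (c : nat) (ds : seq nat).
Hypotheses (condG : is_conductor G c) (multG : mult_seq G ds).

Lemma count_iota_conductor2 : count G (iota 0 c.+2) = (count G (iota 0 c)).+2.
Proof. by have [Gc _] := condG; rewrite !count_iotaS !Gc //= !addn1. Qed.

Lemma mult_seq_size : size ds = (count G (iota 0 c)).+1.
Proof.
have [c' [cond' ->]] := multG; rewrite (conductor_unique cond' condG).
by rewrite size_map size_iota size_filter count_iota_conductor2.
Qed.

Lemma nth_mult_seq i : i < size ds -> nth 0 ds i = rho G c.+2 i.+1 - rho G c.+2 i.
Proof.
move=> i_lt; have [c' [cond' ds_eq]] := multG.
rewrite (conductor_unique cond' condG) in ds_eq; rewrite ds_eq size_map size_iota in i_lt.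
by rewrite ds_eq (nth_map 0) ?size_iota // nth_iota.
Qed.

Lemma mult_seq_rho_index i : i < size ds -> i.+1 < count G (iota 0 c.+2).
Proof. by rewrite mult_seq_size count_iota_conductor2. Qed.

Lemma mult_seq_gt0 i : i < size ds -> 0 < nth 0 ds i.
Proof. by move=> i_lt; rewrite nth_mult_seq // subn_gt0 rho_ltn // mult_seq_rho_index. Qed.

Lemma mult_seq_last : nth 0 ds (size ds).-1 = 1.
Proof.
have [Gc _] := condG.
have cnt1 : (count G (iota 0 c)).+1 = count G (iota 0 c.+1) by rewrite count_iotaS Gc ?addn1.
by rewrite nth_mult_seq mult_seq_size //= {1}cnt1 !rho_count ?Gc // subSnn.
Qed.

Lemma map_iota_mult_seq a :
  [seq a * nth 0 ds i + i | i <- iota 0 (size ds)] =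
  rcons [seq a * nth 0 ds i + i | i <- iota 0 (size ds).-1] (a + size ds - 1).
Proof.
have r0 : 0 < size ds by rewrite mult_seq_size.
rewrite -{1}(prednK r0) -addn1 iotaD map_cat cats1 /= mult_seq_last muln1.
by congr rcons; lia.
Qed.

End MultiplicitySequence.

Section ScaledArf.
Variables (G : pred nat) (c a b : nat).
Hypotheses (arfG : arf G) (condG : is_conductor G c) (a2 : 2 <= a) (cb : c <= b).
Let S := unionTail (scaleS a G) (a * b).
Let a0 : 0 < a := ltnW a2.

Lemma shift_cost_one : shift_cost S (a * b) 1 <= (count G (iota 0 b)).+1.
Proof.
by rewrite /shift_cost add1n ltnS; apply: (@shift_out_scaled_le G a b a0 G) => x _ ->.
Qed.

Lemma shift_cost_consecutive x y : G x -> G y -> x < y -> x <= b ->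
  (forall z, G z -> x < z -> y <= z) ->
  shift_cost S (a * b) (a * (y - x)) <= a * (y - x) + count G (iota 0 x).
Proof.
move=> Gx Gy xy xb y_next; rewrite leq_add2l -(count_iota_ltn G xb).
apply: (shift_out_scaled_le a0) => z _ Gz; rewrite Gz /=.
apply: contraR; rewrite -leqNgt -mulnDr => xz; apply: (scaled_tail_mul _ a0).
case: (ltnP z y) => [zy|yz].
  have zx : z <= x by rewrite leqNgt; apply: contraTN zy => /(y_next _ Gz); rewrite -leqNgt.
  have -> : z = x by apply/eqP; rewrite eqn_leq zx xz.
  by rewrite subnKC // ltnW.
by rewrite addnBA ?(ltnW xy) //; apply: arfG => //; apply: ltnW.
Qed.

Lemma shift_cost_tail k j : j < k -> (forall x, G x -> x + j < b -> ~~ S (a * x + k)) ->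
  (count G (iota 0 b)).+1 <= shift_cost S (a * b) k.
Proof.
move=> jk noS.
have lower : count G (iota 0 (b - j)) <= shift_out S (a * b) k.
  rewrite -(count_iota_ltn G (leq_subr j b)).
  by apply: (shift_out_scaled_ge a0) => x _ Gx xbj; apply: noS => //; lia.
by have := count_iota_le_add G (leq_subr j b); rewrite /shift_cost; lia.
Qed.

Lemma shift_cost_nondvd k :
  ~~ (a %| k) -> (count G (iota 0 b)).+1 <= shift_cost S (a * b) k.
Proof.
move=> ndvd; have k0 : 0 < k by case: k ndvd; rewrite ?dvdn0.
apply: (@shift_cost_tail k (k %/ a)); first exact: ltn_Pdiv.
move=> x _ xb; have lt_ab : a * x + k < a * b.
  apply: leq_trans (_ : a * (x + (k %/ a).+1) <= a * b).
    by rewrite mulnDr ltn_add2l mulnC ltn_ceil.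
  by rewrite leq_mul2l addnS xb orbT.
by rewrite /S scaled_tail_ltn // dvdn_addr ?dvdn_mulr // (negbTE ndvd).
Qed.

Lemma shift_cost_dvd j p : 0 < j -> (forall x, G x -> x < p -> ~~ G (x + j)) ->
  minn (a * j + count G (iota 0 p)) (count G (iota 0 b)).+1
    <= shift_cost S (a * b) (a * j).
Proof.
move=> j0 noGj.
have noS x : G x -> x < p -> x + j < b -> ~~ S (a * x + a * j).
  move=> Gx xp xjb; rewrite /S -mulnDr scaled_tail_ltn ?ltn_mul2l ?a0 //.
  by rewrite dvdn_mulr //= mulKn // (negbTE (noGj x Gx xp)).
rewrite geq_min; case: (leqP (p + j) b) => pjb.
  rewrite /shift_cost leq_add2l -(count_iota_ltn G (_ : p <= b)); last by lia.
  by apply/orP; left; apply: (shift_out_scaled_ge a0) => x _ Gx xp; apply: noS => //; lia.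
apply/orP; right; apply: (shift_cost_tail (ltn_Pmull a2 j0)) => x Gx xjb.
by apply: noS => //; lia.
Qed.

Section MultSeq.
Variable ds : seq nat.
Hypothesis multG : mult_seq G ds.

Lemma shift_cost_mult_seq i : i < size ds ->
  shift_cost S (a * b) (a * nth 0 ds i) <= a * nth 0 ds i + i.
Proof.
move=> i_lt; have iN := mult_seq_rho_index condG multG i_lt.
have /andP[Gx _] := rho_mem (ltnW iN); have /andP[Gy yc] := rho_mem iN.
have xy := rho_ltn iN.
have xb : rho G c.+2 i <= b by lia.
have := shift_cost_consecutive Gx Gy xy xb (fun z Gz => rho_next iN Gz).
by rewrite (nth_mult_seq condG multG) // count_rho // ltnW.
Qed.

Lemma shift_cost_dvd_mult_seq j : 0 < j -> exists2 i, i < size ds &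
  minn (a * nth 0 ds i + i) (count G (iota 0 b)).+1 <= shift_cost S (a * b) (a * j).
Proof.
move=> j0; have [Gc _] := condG.
have exP : exists p, G p && G (p + j) by exists c; rewrite !Gc // leq_addr.
case: (ex_minnP exP) => p /andP[Gp Gpj] p_min.
have pc : p <= c by apply: p_min; rewrite !Gc ?leq_addr.
set i := count G (iota 0 p).
have i_lt : i < size ds by rewrite (mult_seq_size condG multG) ltnS count_iota_mono.
have iN := mult_seq_rho_index condG multG i_lt.
have rho_i : rho G c.+2 i = p by rewrite rho_count //; lia.
have d_le : nth 0 ds i <= j.
  rewrite (nth_mult_seq condG multG) // rho_i leq_subLR.
  by apply: (rho_next iN Gpj); rewrite rho_i -addn1 leq_add2l.
exists i => //; apply: leq_trans (@shift_cost_dvd j p j0 _).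
  by have := leq_mul (leqnn a) d_le; lia.
by move=> x Gx; apply: contraTN => Gxj; rewrite -leqNgt; apply: p_min; rewrite Gx.
Qed.

Lemma FengRao2_scaled_arf :
  FengRao2 S
    (foldr minn (b - c + size ds) [seq a * nth 0 ds i + i | i <- iota 0 (size ds)]).
Proof.
have [Gc _] := condG.
have nGb : (count G (iota 0 b)).+1 = b - c + size ds.
  rewrite (mult_seq_size condG multG) (count_iota_split G cb).
  rewrite (@eq_in_count _ _ predT (iota c (b - c))) ?count_predT ?size_iota; first by lia.
  by move=> x; rewrite mem_iota => /andP[cx _]; rewrite Gc.
apply: (FengRao2_min_shift_cost (conductor_scaled_tail _ _ a2)).
apply: is_min_pos_foldr_minn => [y|k k0].
  rewrite inE => /orP[/eqP->|/mapP[i]]; first by exists 1; rewrite // -nGb shift_cost_one.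
  rewrite mem_iota => /andP[_ i_lt] ->.
  exists (a * nth 0 ds i); last exact: shift_cost_mult_seq.
  by rewrite muln_gt0 a0 (mult_seq_gt0 condG multG).
have [/dvdnP[j k_eq]|ndvd] := boolP (a %| k); last first.
  by exists (b - c + size ds); rewrite ?mem_head // -nGb shift_cost_nondvd.
move: k0; rewrite k_eq muln_gt0 => /andP[j0 _].
rewrite [j * a]mulnC; have [i i_lt] := shift_cost_dvd_mult_seq j0.
rewrite geq_min nGb => /orP[le_d|le_b]; last by exists (b - c + size ds); rewrite ?mem_head.
exists (a * nth 0 ds i + i) => //.
by rewrite inE; apply/orP; right; apply/mapP; exists i; rewrite ?mem_iota.
Qed.

End MultSeq.

End ScaledArf.

Theorem corollary3p12 (G : pred nat) (c e a b : nat) :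
  numerical_semigroup G -> arf G -> is_conductor G c ->
  G e -> 0 < e -> 2 <= a -> c <= b ->
  (forall E2 : int,
     FengRao2 (unionTail (scaleS a G) (a * b)) E2 ->
     FengRao2 (unionTail (scaleS a (shiftS G e)) (a * (b + e)))
              (Num.min (Posz (a * e)) (E2 + 1)%R)) /\
  (forall ds : seq nat, mult_seq G ds ->
     let r := size ds in
     FengRao2 (unionTail (scaleS a G) (a * b))
       (Posz (foldr minn (b - c + r)
          ([seq a * nth 0 ds i + i | i <- iota 0 r.-1] ++ [:: a + r - 1])))).
Proof.
move=> nsG arfG condG Ge e0 a2 cb; split; first exact: FengRao2_scaled_shiftS.
move=> ds multG r; rewrite cats1 -(map_iota_mult_seq condG multG).
exact: FengRao2_scaled_arf.
Qed.
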